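(* Let $A$ be an algebra over a field of characteristic zero satisfying $(x^2,x^2,x^2)=0$ for all $x\in A$, and assume $A$ has a left unit $e$ which is not a divisor of zero. Then $(xe)e=x$ for all $x\in A$.
   Context: $(x,y,z)=(xy)z-x(yz)$. A left unit $e$ satisfies $ex=x$ for all $x$. *)

From mathcomp Require Import all_boot all_algebra.
Set Implicit Arguments. Unset Strict Implicit. Unset Printing Implicit Defensive.
Import GRing.Theory.
Local Open Scope ring_scope.

(* A (not necessarily associative) algebra over a field F: an F-vector space V
   with an F-bilinear product [mul]. *)
Definition bilinear_mul (F : fieldType) (V : lmodType F) (mul : V -> V -> V) :=
  (forall (a : F) (x y z : V), mul (a *: x + y) z = a *: mul x z + mul y z) /\
  (forall (a : F) (x y z : V), mul x (a *: y + z) = a *: mul x y + mul x z).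

Definition assoc (F : fieldType) (V : lmodType F) (mul : V -> V -> V) (x y z : V) : V :=
  mul (mul x y) z - mul x (mul y z).

Definition left_unit (F : fieldType) (V : lmodType F) (mul : V -> V -> V) (e : V) :=
  forall x, mul e x = x.

Definition zero_divisor (F : fieldType) (V : lmodType F) (mul : V -> V -> V) (e : V) :=
  exists x : V, x != 0 /\ (mul e x = 0 \/ mul x e = 0).

From mathcomp Require Import all_boot all_algebra.
Import GRing.Theory.
Local Open Scope ring_scope.

Set Implicit Arguments.
Unset Strict Implicit.
Unset Printing Implicit Defensive.

(* Put u = e + t x.  As e is a left unit, u^2 = e + t r(t) with
   r(t) = (x + xe) + t x^2, and every associator with e in the first slot
   vanishes, so trilinearity gives (u^2,u^2,u^2) = t g(t) for a polynomial g
   in t with values in A and g(0) = (x + xe, e, e).  Hence g vanishes at every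
   t <> 0, and in characteristic 0 a polynomial doing so also vanishes at 0.
   Unfolding (x + xe, e, e) = 0 gives ((xe)e - x) e = 0, so (xe)e = x because
   e is not a zero divisor. *)

Section BilinearProduct.
Variables (F : fieldType) (V : lmodType F) (mul : V -> V -> V).
Hypothesis mul_bilinear : bilinear_mul mul.

Lemma linear_mull z : linear (mul ^~ z).
Proof. by case: mul_bilinear => mulDZl _ a x y; exact: mulDZl. Qed.

Lemma linear_mulr z : linear (mul z).
Proof. by case: mul_bilinear => _ mulDZr a x y; exact: mulDZr. Qed.

Lemma mulDl x y z : mul (x + y) z = mul x z + mul y z.
Proof. exact: (GRing.semilinear_linear (linear_mull z)).2. Qed.

Lemma mulBl x y z : mul (x - y) z = mul x z - mul y z.
Proof. exact: (zmod_morphism_linear (linear_mull z) x y). Qed.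

Lemma mul0l z : mul 0 z = 0.
Proof. by rewrite -(subrr (0 : V)) mulBl !subrr. Qed.

Lemma mulZl a x z : mul (a *: x) z = a *: mul x z.
Proof. exact: (GRing.semilinear_linear (linear_mull z)).1. Qed.

Lemma mulDr x y z : mul z (x + y) = mul z x + mul z y.
Proof. exact: (GRing.semilinear_linear (linear_mulr z)).2. Qed.

Lemma mulZr a x z : mul z (a *: x) = a *: mul z x.
Proof. exact: (GRing.semilinear_linear (linear_mulr z)).1. Qed.

Lemma assoc_linl t u1 u2 v w :
  assoc mul (u1 + t *: u2) v w = assoc mul u1 v w + t *: assoc mul u2 v w.
Proof. by rewrite /assoc !(mulDl, mulZl, mulDr, mulZr) scalerBr opprD addrACA. Qed.

Lemma assoc_linm t u v1 v2 w :
  assoc mul u (v1 + t *: v2) w = assoc mul u v1 w + t *: assoc mul u v2 w.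
Proof. by rewrite /assoc !(mulDl, mulZl, mulDr, mulZr) scalerBr opprD addrACA. Qed.

Lemma assoc_linr t u v w1 w2 :
  assoc mul u v (w1 + t *: w2) = assoc mul u v w1 + t *: assoc mul u v w2.
Proof. by rewrite /assoc !(mulDl, mulZl, mulDr, mulZr) scalerBr opprD addrACA. Qed.

Variable e : V.
Hypothesis e_left_unit : left_unit mul e.

Lemma assoc_left_unit u v : assoc mul e u v = 0.
Proof. by rewrite /assoc !e_left_unit subrr. Qed.

Lemma sqr_left_unitD t x :
  mul (e + t *: x) (e + t *: x) = e + t *: ((x + mul x e) + t *: mul x x).
Proof.
by rewrite !(mulDl, mulDr, mulZl, mulZr) !e_left_unit !scalerDr !scalerA !addrA.
Qed.

Lemma assoc_left_unitD t r (u := e + t *: r) :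
  assoc mul u u u = t *: (assoc mul r e e + t *: (assoc mul r e r + assoc mul r r u)).
Proof.
rewrite assoc_linl assoc_left_unit add0r assoc_linm assoc_linr.
by rewrite -addrA -scalerDr.
Qed.

End BilinearProduct.

Section PolynomialFunctions.
Variables (F : fieldType) (V : lmodType F).

(* [polyfun_lt n f]: f is a polynomial function of degree < n, written with
   its top coefficient first so that induction peels off the leading term. *)
Fixpoint polyfun_lt (n : nat) (f : F -> V) : Prop :=
  if n is m.+1 then
    exists c (h : F -> V), polyfun_lt m h /\ forall t, f t = t ^+ m *: c + h t
  else forall t, f t = 0.

Definition polyfun (f : F -> V) := exists n, polyfun_lt n f.

Lemma polyfun_lt_ext n f g : f =1 g -> polyfun_lt n f -> polyfun_lt n g.
Proof.
case: n => [|n] fg /=; first by move=> f0 t; rewrite -fg.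
by case=> c [h [hn fE]]; exists c, h; split => // t; rewrite -fg.
Qed.

Lemma polyfun_ltS n f : polyfun_lt n f -> polyfun_lt n.+1 f.
Proof. by move=> fn; exists 0, f; split => // t; rewrite scaler0 add0r. Qed.

Lemma polyfun_lt_leq n m f : (n <= m)%N -> polyfun_lt n f -> polyfun_lt m f.
Proof.
move=> /subnKC <-; elim: (m - n)%N => [|k IHk] fn; first by rewrite addn0.
by rewrite addnS; apply/polyfun_ltS/IHk.
Qed.

Lemma polyfun_ltD n f g :
  polyfun_lt n f -> polyfun_lt n g -> polyfun_lt n (fun t => f t + g t).
Proof.
elim: n f g => [|n IHn] f g /=; first by move=> f0 g0 t; rewrite f0 g0 addr0.
case=> c [h [hn fE]] [d [k [kn gE]]]; exists (c + d), (fun t => h t + k t).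
by split; [exact: IHn | move=> t; rewrite fE gE scalerDr addrACA].
Qed.

Lemma polyfun_lt_linear n (L : V -> V) f :
  linear L -> polyfun_lt n f -> polyfun_lt n (fun t => L (f t)).
Proof.
move=> /GRing.semilinear_linear[LZ LD].
have L0 : L 0 = 0 by apply: (addrI (L 0)); rewrite -LD !addr0.
elim: n f => [|n IHn] f /=; first by move=> f0 t; rewrite f0 L0.
case=> c [h [hn fE]]; exists (L c), (fun t => L (h t)).
by split; [exact: IHn | move=> t; rewrite fE LD LZ].
Qed.

Lemma polyfun_lt_scale_arg n (s : F) f :
  polyfun_lt n f -> polyfun_lt n (fun t => f (s * t)).
Proof.
elim: n f => [|n IHn] f /=; first by move=> f0 t; rewrite f0.
case=> c [h [hn fE]]; exists (s ^+ n *: c), (fun t => h (s * t)).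
by split; [exact: IHn | move=> t; rewrite fE exprMn scalerA mulrC].
Qed.

Lemma polyfun_lt_scalet n f :
  polyfun_lt n f -> polyfun_lt n.+1 (fun t => t *: f t).
Proof.
elim: n f => [|n IHn] f /=.
  by move=> f0; exists 0, (fun _ => 0); split => // t; rewrite f0 !scaler0 addr0.
case=> c [h [hn fE]]; exists c, (fun t => t *: h t).
by split; [exact: IHn | move=> t; rewrite fE scalerDr scalerA exprS].
Qed.

(* Comparing f(s t) with s^(n-1) f(t) cancels the leading coefficient. *)
Lemma polyfun_lt_eq0_at0 (s : F) n f :
  s != 0 -> (forall k, s ^+ k.+1 != 1) -> polyfun_lt n f ->
  (forall t, t != 0 -> f t = 0) -> f 0 = 0.
Proof.
move=> s_neq0 s_not_unity; elim: n f => [|n IHn] f /=; first by move=> f0 _.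
case=> c [h [hn fE]] f_eq0.
have h_top t : t != 0 -> h t = - (t ^+ n *: c).
  by move=> t_neq0; apply/eqP; rewrite -addr_eq0 addrC -fE f_eq0.
pose k t := h (s * t) + (- s ^+ n) *: h t.
have kn : polyfun_lt n k.
  apply: polyfun_ltD; first exact: polyfun_lt_scale_arg.
  by apply: polyfun_lt_linear hn => a u v; rewrite scalerDr !scalerA mulrC.
have k_eq0 t : t != 0 -> k t = 0.
  move=> t_neq0; rewrite /k !h_top ?mulf_neq0 //.
  by rewrite exprMn -scalerA scalerN scaleNr opprK addNr.
have := IHn _ kn k_eq0; rewrite /k mulr0 fE.
case: n {IHn kn k_eq0 h_top k} hn fE => [|n] hn fE k0.
  by have := f_eq0 1 (oner_neq0 _); rewrite fE !hn !expr0 !addr0.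
have : (1 - s ^+ n.+1) *: h 0 = 0 by rewrite scalerBl scale1r -scaleNr.
move/eqP; rewrite scaler_eq0 subr_eq0 eq_sym (negbTE (s_not_unity n)) /=.
by move/eqP->; rewrite expr0n scale0r addr0.
Qed.

Lemma polyfun_ext f g : f =1 g -> polyfun f -> polyfun g.
Proof. by move=> fg [n fn]; exists n; apply: polyfun_lt_ext fn. Qed.

Lemma polyfun_cst v : polyfun (fun _ => v).
Proof. by exists 1%N, v, (fun _ => 0); split => // t; rewrite expr0 scale1r addr0. Qed.

Lemma polyfunD f g : polyfun f -> polyfun g -> polyfun (fun t => f t + g t).
Proof.
move=> [n fn] [m gm]; exists (maxn n m).
by apply: polyfun_ltD; apply: polyfun_lt_leq; [exact: leq_maxl | | exact: leq_maxr |].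
Qed.

Lemma polyfun_linear (L : V -> V) f :
  linear L -> polyfun f -> polyfun (fun t => L (f t)).
Proof. by move=> linL [n fn]; exists n; apply: polyfun_lt_linear. Qed.

Lemma polyfunB f g : polyfun f -> polyfun g -> polyfun (fun t => f t - g t).
Proof.
move=> pf pg; apply: polyfunD pf _.
by apply: polyfun_linear pg => a u v; rewrite opprD scalerN.
Qed.

Lemma polyfun_scalet f : polyfun f -> polyfun (fun t => t *: f t).
Proof. by move=> [n fn]; exists n.+1; apply: polyfun_lt_scalet. Qed.

Lemma polyfun_scale_exp k f : polyfun f -> polyfun (fun t => t ^+ k *: f t).
Proof.
move=> pf; elim: k => [|k IHk].
  by apply: polyfun_ext pf => t; rewrite expr0 scale1r.
by apply: polyfun_ext (polyfun_scalet IHk) => t; rewrite scalerA -exprS.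
Qed.

Lemma pchar0_polyfun_eq0_at0 f :
  [pchar F] =i pred0 -> polyfun f -> (forall t, t != 0 -> f t = 0) -> f 0 = 0.
Proof.
move=> pcharF0 [n fn]; apply: (@polyfun_lt_eq0_at0 2%:R n) fn.
  by rewrite (pcharf0P F).1.
move=> k; rewrite -natrX -[X in _ != X]/(1%:R) -subr_eq0 -natrB ?expn_gt0 //.
by rewrite (pcharf0P F).1 // subn_eq0 -[X in (_ <= X)%N](expn0 2) leq_exp2l.
Qed.

End PolynomialFunctions.

Section PolynomialProducts.
Variables (F : fieldType) (V : lmodType F) (mul : V -> V -> V).
Hypothesis mul_bilinear : bilinear_mul mul.

Lemma polyfun_mul (f g : F -> V) :
  polyfun f -> polyfun g -> polyfun (fun t => mul (f t) (g t)).
Proof.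
move=> [n fn] pg; elim: n f fn => [|n IHn] f /=.
  by move=> f0; exists 0%N => t /=; rewrite f0 (mul0l mul_bilinear).
case=> c [h [hn fE]].
apply: (@polyfun_ext _ _ (fun t => t ^+ n *: mul c (g t) + mul (h t) (g t))).
  by move=> t; rewrite fE (mulDl mul_bilinear) (mulZl mul_bilinear).
apply: polyfunD; last exact: IHn.
by apply/polyfun_scale_exp/polyfun_linear => //; exact: linear_mulr.
Qed.

Lemma polyfun_assoc (u v w : F -> V) : polyfun u -> polyfun v -> polyfun w ->
  polyfun (fun t => assoc mul (u t) (v t) (w t)).
Proof. by move=> pu pv pw; apply: polyfunB; do !apply: polyfun_mul. Qed.

End PolynomialProducts.

Theorem lemma1 (F : fieldType) (V : lmodType F) (mul : V -> V -> V) (e : V) :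
  [pchar F] =i pred0 ->
  bilinear_mul mul ->
  (forall x : V, assoc mul (mul x x) (mul x x) (mul x x) = 0) ->
  left_unit mul e ->
  ~ zero_divisor mul e ->
  forall x : V, mul (mul x e) e = x.
Proof.
move=> pcharF0 mul_bilinear assoc_sqr e_left_unit e_not_zero_divisor x.
pose r t := (x + mul x e) + t *: mul x x.
pose g t := assoc mul (r t) e e +
  t *: (assoc mul (r t) e (r t) + assoc mul (r t) (r t) (e + t *: r t)).
have g_eq0 t : t != 0 -> g t = 0.
  move=> t_neq0; have /eqP := assoc_sqr (e + t *: x).
  rewrite sqr_left_unitD // assoc_left_unitD // scaler_eq0 (negbTE t_neq0).
  by move/eqP.
have r_poly : polyfun r by apply/polyfunD/polyfun_scalet/polyfun_cst/polyfun_cst.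
have g_poly : polyfun g.
  apply/polyfunD/polyfun_scalet/polyfunD; apply: polyfun_assoc => //;
    by [exact: polyfun_cst | apply/polyfunD/polyfun_scalet/r_poly/polyfun_cst].
have := pchar0_polyfun_eq0_at0 pcharF0 g_poly g_eq0.
rewrite /g /r !scale0r !addr0 /assoc e_left_unit !(mulDl mul_bilinear).
set y := mul x e; rewrite [mul y e + _]addrC [y + _]addrC addrKA => /eqP.
rewrite subr_eq0 => /eqP yee.
apply/eqP; rewrite -subr_eq0; apply/negPn/negP => yeBx_neq0; apply: e_not_zero_divisor.
by exists (mul y e - x); split => //; right; rewrite (mulBl mul_bilinear) yee subrr.
Qed.
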